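(* For all $n,m\in\mathbb{N}$, \[ \sum_{j=0}^{n}\sum_{i=0}^{j}\frac{\binom{2n+2-m}{i}}{\binom{2n+1}{j}}=\frac{n+1}{2^{m+1}}\left(2H_{2n+1}-H_n-\sum_{k=1}^{m}\frac{2^{k+1}}{k}\left(\frac{\binom{2n+2-k}{n+1}}{\binom{2n+2}{n+1}}-1\right)\right). \]
   Context: For $x\in\mathbb{C}$ (in particular any integer $x$, possibly negative) and $i\in\mathbb{N}$: $\binom{x}{i}=x(x-1)\cdots(x-i+1)/i!$. $H_n=\sum_{k=1}^{n}\frac1k$ is the $n$-th harmonic number ($H_0=0$). Empty sums are $0$. *)

From HB Require Import structures.
From mathcomp Require Import all_boot all_order all_algebra.
Set Implicit Arguments. Unset Strict Implicit. Unset Printing Implicit Defensive.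
Import Order.TTheory GRing.Theory Num.Theory.
Local Open Scope ring_scope.

Definition binomz (x : int) (i : nat) : rat :=
  (\prod_(j < i) (x - (j%:Z))%:~R) / (i`!)%:R.

Definition harm (n : nat) : rat := \sum_(1 <= k < n.+1) (k%:R)^-1.

From HB Require Import structures.
From mathcomp Require Import all_boot all_order all_algebra.
From mathcomp Require Import ring zify.
Import Order.TTheory GRing.Theory Num.Theory.
Local Open Scope ring_scope.

(* Write S(m) for the double sum on the left, R(m) for the
   right-hand side and T(m) = \sum_(j <= n) binomz (2n+1-m) j / C(2n+1, j).
   1. Pascal's rule on the upper index turns the inner partial row sums of
      S(m) into those of S(m+1):  S(m) = 2 S(m+1) - T(m).
   2. T(m) telescopes: the general identity [sum_binomz_over_binq] evaluates
      (N+1-x) \sum_(j < J) binomz x j / C(N, j) in closed form, and this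
      closed form is exactly the k = m+1 summand of R, so that also
      R(m) = 2 R(m+1) - T(m).
   3. Hence S - R is halved at each step in m, and it suffices to prove the
      base case S(0) = R(0), i.e. S(0) = (n+1)/2 (2 H_(2n+1) - H_n).
   4. For m = 0 all binomials are ordinary ones.  Exchanging the sums and
      using the hockey-stick identity gives S(0) = (n+1) F(n+1, 2n+2) with
      F(p, q) = \sum_(1 <= k <= p) 2^k/k C(p,k)/C(q,k).  Two contiguous
      relations for F (in q and in p), together with the closed form of the
      companion sum Q(a, b) = \sum_(k <= a) 2^k C(a,k)/C(b,k), show that
      F(p+1, 2p+2) - F(p, 2p) = 1/(2p+1), whence F(p, 2p) = H_(2p) - H_p/2. *)

Lemma fact_neq0 n : (n`!)%:R != 0 :> rat.
Proof. by rewrite pnatr_eq0 -lt0n fact_gt0. Qed.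

Lemma natS_neq0 n : (n.+1)%:R != 0 :> rat.
Proof. by rewrite pnatr_eq0. Qed.

Lemma add1n_neq0 (i : nat) : 1 + i%:R != 0 :> rat.
Proof. by rewrite addrC natr1 natS_neq0. Qed.

Lemma natr_odd_neq0 p : (2 * p + 1)%:R != 0 :> rat.
Proof. by rewrite addn1 natS_neq0. Qed.

Lemma natr_even (n : nat) : (2 * n + 1).+1%:R = 2 * n.+1%:R :> rat.
Proof. by rewrite -[2]/(2%:R) -natrM; congr (_%:R); lia. Qed.

(* ** Generalised binomial coefficients *)

Lemma binomz0 x : binomz x 0 = 1.
Proof. by rewrite /binomz big_ord0 divr1. Qed.

Lemma binomzS x i : binomz x i.+1 = binomz x i * (x%:~R - i%:R) / i.+1%:R.
Proof.
rewrite /binomz big_ord_recr /= factS natrM rmorphB /=.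
by field; rewrite fact_neq0 add1n_neq0.
Qed.

Lemma binomz_absorb x i : binomz (x + 1) i.+1 = binomz x i * (x%:~R + 1) / i.+1%:R.
Proof.
rewrite /binomz big_ord_recl /= factS natrM subr0 rmorphD /=.
have -> : \prod_(j < i) ((x + 1 - (lift ord0 j)%:Z)%:~R : rat)
          = \prod_(j < i) (x - j%:Z)%:~R.
  by apply: eq_bigr => j _; rewrite lift0 /= -addn1 PoszD opprD addrACA subrr addr0.
by field; rewrite fact_neq0 add1n_neq0.
Qed.

Lemma binomz_pascal x i : binomz (x + 1) i.+1 = binomz x i.+1 + binomz x i.
Proof.
rewrite binomz_absorb binomzS.
by field; rewrite add1n_neq0.
Qed.

Definition binq (n k : nat) : rat := 'C(n, k)%:R.

Lemma binomz_nat (n k : nat) : binomz n%:Z k = binq n k.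
Proof.
elim: k => [|k IH]; first by rewrite binomz0 /binq bin0.
rewrite binomzS IH /binq.
have -> : 'C(n, k.+1)%:R = 'C(n, k)%:R * (n - k)%:R / k.+1%:R :> rat.
  by rewrite -natrM mulnC -mul_bin_left natrM mulrC mulKf ?natS_neq0.
have [hk|hk] := leqP k n; first by rewrite natrB.
by rewrite bin_small // !mul0r.
Qed.

Lemma binq_neq0 N j : (j <= N)%N -> binq N j != 0.
Proof. by move=> h; rewrite /binq pnatr_eq0 -lt0n bin_gt0. Qed.

Lemma binq_small n k : (n < k)%N -> binq n k = 0.
Proof. by move=> h; rewrite /binq bin_small. Qed.

Lemma binqS q k : binq q k.+1 = binq q k * (q%:R - k%:R) / k.+1%:R.
Proof. by rewrite -!binomz_nat binomzS. Qed.

Lemma binq_absorb M k : binq M.+1 k.+1 = binq M k * M.+1%:R / k.+1%:R.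
Proof.
by rewrite -!binomz_nat -addn1 PoszD binomz_absorb natrD.
Qed.

(* ** Partial row sums *)

Definition rowsum (x : int) (j : nat) : rat := \sum_(0 <= i < j.+1) binomz x i.

Lemma rowsumS x j : rowsum x j.+1 = rowsum x j + binomz x j.+1.
Proof. by rewrite /rowsum big_nat_recr. Qed.

Lemma rowsum_succ x j : rowsum (x + 1) j = 2 * rowsum x j - binomz x j.
Proof.
elim: j => [|j IH]; first by rewrite /rowsum !big_nat1 !binomz0; ring.
by rewrite rowsumS IH binomz_pascal rowsumS; ring.
Qed.

Lemma rowsum_nat (M j : nat) : rowsum M%:Z j = \sum_(0 <= i < j.+1) binq M i.
Proof. by apply: eq_bigr => i _; rewrite binomz_nat. Qed.

Lemma rowsum_natS (M j : nat) : rowsum M.+1%:Z j = 2 * rowsum M%:Z j - binq M j.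
Proof. by rewrite -binomz_nat -rowsum_succ -addn1 PoszD. Qed.

Lemma rowsum_full (M : nat) : rowsum M%:Z M = 2 ^+ M.
Proof.
elim: M => [|M IH]; first by rewrite /rowsum big_nat1 binomz0.
by rewrite rowsumS rowsum_natS IH binomz_nat /binq !binn exprS; ring.
Qed.

(* By the symmetry of an odd row, its first half sums to 2^(2p). *)
Lemma rowsum_half p : rowsum (2 * p + 1)%:Z p = 2 ^+ (2 * p).
Proof.
have full := rowsum_full (2 * p + 1).
rewrite rowsum_nat (@big_cat_nat _ _ _ p.+1) //= in full; last lia.
have mirror : \sum_(p.+1 <= i < (2 * p + 1).+1) binq (2 * p + 1) i
              = \sum_(0 <= i < p.+1) binq (2 * p + 1) i.
  rewrite -{1}[p.+1]add0n big_addn subSS (_ : (2 * p + 1 - p = p.+1)%N); last lia.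
  rewrite big_nat_rev; apply: eq_big_nat => i /andP[_ hi].
  rewrite /binq -bin_sub; last lia.
  by congr (_%:R); congr 'C(_, _); lia.
rewrite mirror -rowsum_nat in full.
apply: (@mulfI _ 2) => //.
rewrite -exprS (_ : (2 * p).+1 = 2 * p + 1)%N; last lia.
by rewrite -full; ring.
Qed.

(* ** The recurrence in m *)

Definition dsum (n m : nat) : rat :=
  \sum_(0 <= j < n.+1) \sum_(0 <= i < j.+1)
      binomz ((2 * n + 2)%:Z - m%:Z) i / binomz (2 * n + 1)%N j.

Definition rhs (n m : nat) : rat :=
  n.+1%:R / 2 ^+ m.+1 *
    (2 * harm (2 * n + 1) - harm n
     - \sum_(1 <= k < m.+1)
         (2 ^+ k.+1 / k%:R *
          (binomz ((2 * n + 2)%:Z - k%:Z) n.+1 / binomz (2 * n + 2)%N n.+1 - 1))).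

Definition tsum (n m : nat) : rat :=
  \sum_(0 <= j < n.+1) binomz ((2 * n + 1)%:Z - m%:Z) j / binq (2 * n + 1) j.

(* Step 1: Pascal's rule on the upper index of the inner sums. *)
Lemma dsum_rec n m : dsum n m = 2 * dsum n m.+1 - tsum n m.
Proof.
rewrite /dsum /tsum mulr_sumr -sumrB; apply: eq_bigr => j _.
rewrite -!mulr_suml binomz_nat.
have -> : (2 * n + 2)%:Z - m%:Z = ((2 * n + 2)%:Z - m.+1%:Z) + 1 by lia.
rewrite -[\sum_(0 <= i < j.+1) binomz (_ + 1) i]/(rowsum _ j) rowsum_succ /rowsum.
have -> : (2 * n + 2)%:Z - m.+1%:Z = (2 * n + 1)%:Z - m%:Z by lia.
ring.
Qed.

(* Step 2: a telescoping identity, valid for any integer x and J <= N: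
   (N+1-x) \sum_(j < J) binomz x j / C(N, j)
     = (N+1) - binomz x J (N+1-J) / C(N, J). *)
Lemma sum_binomz_over_binq (x : int) (N J : nat) : (J <= N)%N ->
  (N.+1%:R - x%:~R) * \sum_(0 <= j < J) binomz x j / binq N j
  = N.+1%:R - binomz x J * (N.+1%:R - J%:R) / binq N J.
Proof.
move=> hJN.
pose f j := binomz x j * (N.+1%:R - j%:R) / binq N j.
have step k : (0 <= k < J)%N ->
    - ((N.+1%:R - x%:~R) * (binomz x k / binq N k)) = f k.+1 - f k.
  move=> /andP[_ hk]; rewrite /f binomzS binqS -[N.+1]addn1 natrD.
  have c0 : binq N k != 0 by apply: binq_neq0; lia.
  have d : N%:R - k%:R != 0 :> rat by rewrite -natrB ?pnatr_eq0; lia.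
  by field; rewrite c0 d add1n_neq0.
rewrite mulr_sumr -[LHS]opprK -sumrN (telescope_sumr_eq f _ (leq0n J) step).
by rewrite /f binomz0 /binq bin0 subr0 !divr1 mul1r opprB.
Qed.

Lemma binq_central n : binq (2 * n + 2) n.+1 = 2 * binq (2 * n + 1) n.+1.
Proof.
rewrite /binq -natrM (_ : (2 * n + 2 = (2 * n + 1).+1)%N); last lia.
have sym : 'C(2 * n + 1, n) = 'C(2 * n + 1, n.+1).
  by rewrite -(@bin_sub (2 * n + 1) n.+1); [congr 'C(_, _) | ]; lia.
by rewrite binS sym; congr (_%:R); lia.
Qed.

(* T(m) is, up to a factor, the (m+1)-th summand of the right-hand side. *)
Lemma tsum_closed n m :
  tsum n m = - 2 * n.+1%:R / m.+1%:R *
     (binomz ((2 * n + 2)%:Z - m.+1%:Z) n.+1 / binq (2 * n + 2) n.+1 - 1).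
Proof.
have hN : (n.+1 <= 2 * n + 1)%N by lia.
have := @sum_binomz_over_binq ((2 * n + 1)%:Z - m%:Z) _ _ hN.
rewrite -/(tsum n m) rmorphB /= -!pmulrn.
have -> : (2 * n + 2)%:Z - m.+1%:Z = (2 * n + 1)%:Z - m%:Z by lia.
rewrite binq_central; set b := binomz _ n.+1.
have c0 : binq (2 * n + 1) n.+1 != 0 by apply: binq_neq0.
move: c0; set c := binq _ _ => c0.
rewrite -[n.+1]addn1 -[m.+1]addn1 -[(2 * n + 1).+1]addn1 !natrD => h.
set A := (X in X * tsum n m = _) in h.
have hA : A = m%:R + 1 by rewrite /A; ring.
have hm : m%:R + 1 != 0 :> rat by rewrite natr1 natS_neq0.
apply: (mulfI hm); rewrite -{1}hA h.
by field; rewrite c0 hm.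
Qed.

Lemma rhs_rec n m : rhs n m = 2 * rhs n m.+1 - tsum n m.
Proof.
rewrite tsum_closed /rhs [in X in _ = 2 * X - _]big_nat_recr //= !binomz_nat !exprS.
set c := binomz _ n.+1 / _; set s := \sum_(_ <= _ < _) _.
have hp : 2 ^+ m != 0 :> rat by rewrite expf_neq0.
move: hp; set a := harm _; set b := harm n; set p := 2 ^+ m => hp.
clearbody a b c s p.
by field; rewrite hp add1n_neq0.
Qed.

(* Step 3: S - R halves from m to m+1, so S(0) = R(0) gives S(m) = R(m). *)
Lemma dsum_rhs_from_base n :
  dsum n 0 = rhs n 0 -> forall m, dsum n m = rhs n m.
Proof.
move=> base; elim=> [//|m IH].
have := dsum_rec n m; rewrite IH rhs_rec => /eqP.
by rewrite (inj_eq (addIr _)) (inj_eq (mulfI _)) // => /eqP.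
Qed.

(* ** The base case m = 0 *)

Lemma binqE n k : (k <= n)%N -> binq n k = n`!%:R / (k`!%:R * (n - k)`!%:R).
Proof.
move=> h; rewrite /binq -(bin_fact h) !natrM mulrK //.
by rewrite unitfE mulf_neq0 // fact_neq0.
Qed.

Lemma binq_ratio N j k : (k <= j)%N -> (j <= N)%N ->
  binq (N - k) (N - j) / binq N j = binq j k / binq N k.
Proof.
move=> hkj hjN; rewrite !binqE; try lia.
have -> : (N - k - (N - j) = j - k)%N by lia.
by field; rewrite !fact_neq0.
Qed.

Lemma weighted_diagonal_sum (s a : nat) :
  \sum_(0 <= k < a.+1) 2 ^+ k * binq (a + s - k) s = rowsum (a + s).+1%:Z a.
Proof.
elim: a => [|a IH].
  by rewrite big_nat1 /rowsum big_nat1 binomz0 add0n subn0 /binq binn mulr1.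
rewrite big_nat_recl // expr0 mul1r.
have -> : \sum_(0 <= i < a.+1) 2 ^+ i.+1 * binq (a.+1 + s - i.+1) s
          = 2 * \sum_(0 <= k < a.+1) 2 ^+ k * binq (a + s - k) s.
  rewrite mulr_sumr; apply: eq_bigr => i _.
  by rewrite exprS addSn subSS mulrA.
rewrite IH addSn [rowsum (a + s).+2%:Z _]rowsum_natS rowsumS binomz_nat.
have -> : binq (a + s).+1 a.+1 = binq (a.+1 + s - 0) s.
  by rewrite /binq -bin_sub; [congr (_%:R); congr 'C(_, _) | ]; lia.
ring.
Qed.

Definition qsum (a b : nat) : rat := \sum_(0 <= k < a.+1) 2 ^+ k * binq a k / binq b k.

Lemma qsum_closed a b : (a <= b)%N -> qsum a b = rowsum b.+1%:Z a / binq b a.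
Proof.
move=> hab; have := weighted_diagonal_sum (b - a) a.
rewrite (_ : (a + (b - a) = b)%N); last lia.
move=> <-; rewrite mulr_suml /qsum; apply: eq_big_nat => k /andP[_ hk].
by rewrite -!mulrA binq_ratio //; lia.
Qed.

Lemma qsum_split p q :
  qsum p q = 1 + \sum_(0 <= k < p) 2 ^+ k.+1 * binq p k.+1 / binq q k.+1.
Proof. by rewrite /qsum big_nat_recl // expr0 mul1r /binq !bin0 divr1. Qed.

Lemma hockey_stick n k : \sum_(0 <= j < n.+1) binq j k = binq n.+1 k.+1.
Proof.
elim: n => [|n IH].
  by rewrite big_nat1 /binq binS (@bin_small 0 k.+1) // add0n.
by rewrite big_nat_recr //= IH /binq [in RHS]binS natrD.
Qed.

(* S(0) as a single sum, by expanding each inner sum with [qsum_closed],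
   exchanging the order of summation and applying the hockey stick. *)
Lemma dsum0_single n :
  dsum n 0 = \sum_(0 <= k < n.+1) 2 ^+ k * binq n.+1 k.+1 / binq (2 * n + 1) k.
Proof.
have inner j : (j < n.+1)%N ->
   \sum_(0 <= i < j.+1) binomz ((2 * n + 2)%:Z - 0%:Z) i / binomz (2 * n + 1)%N j
   = \sum_(0 <= k < n.+1) 2 ^+ k * binq j k / binq (2 * n + 1) k.
  move=> hj; rewrite -mulr_suml -[\sum_(0 <= i < j.+1) _]/(rowsum _ j) binomz_nat.
  have -> : (2 * n + 2)%:Z - 0%:Z = (2 * n + 1).+1%:Z by lia.
  rewrite -qsum_closed; last lia.
  rewrite /qsum (@big_cat_nat _ _ _ j.+1 0 n.+1) //=.
  rewrite [X in _ = _ + X]big1_seq ?addr0 // => k /andP[_].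
  by rewrite mem_index_iota => /andP[hk _]; rewrite binq_small // mulr0 mul0r.
rewrite /dsum (eq_big_nat _ _ (fun j hj => inner j (proj2 (andP hj)))).
rewrite exchange_big_nat; apply: eq_bigr => k _.
by rewrite -hockey_stick mulr_sumr mulr_suml; apply: eq_bigr => j _; ring.
Qed.

Definition fsum (p q : nat) : rat :=
  \sum_(1 <= k < p.+1) 2 ^+ k / k%:R * binq p k / binq q k.

Lemma fsum_split p q :
  fsum p q = \sum_(0 <= k < p) 2 ^+ k.+1 / k.+1%:R * binq p k.+1 / binq q k.+1.
Proof. by rewrite /fsum big_add1. Qed.

Lemma dsum0_fsum n : dsum n 0 = n.+1%:R * fsum n.+1 (2 * n + 2).
Proof.
rewrite dsum0_single fsum_split mulr_sumr; apply: eq_big_nat => k /andP[_ hk].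
rewrite (_ : (2 * n + 2 = (2 * n + 1).+1)%N); last lia.
rewrite [binq (2 * n + 1).+1 _]binq_absorb exprS.
have c0 : binq (2 * n + 1) k != 0 by apply: binq_neq0; lia.
rewrite natr_even.
by field; rewrite c0 !add1n_neq0.
Qed.

Lemma fsum_succ_right p q : (p <= q)%N ->
  fsum p q.+1 = fsum p q - (qsum p q - 1) / q.+1%:R.
Proof.
move=> hpq; suff <- : fsum p q - fsum p q.+1 = (qsum p q - 1) / q.+1%:R by ring.
rewrite qsum_split !fsum_split (addrC 1) addrK -sumrB mulr_suml.
apply: eq_big_nat => k /andP[_ hk].
rewrite binq_absorb !binqS.
have c0 : binq q k != 0 by apply: binq_neq0; lia.
have d : q%:R - k%:R != 0 :> rat by rewrite -natrB ?pnatr_eq0; lia.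
by field; rewrite c0 d !add1n_neq0.
Qed.

Lemma fsum_succ_left p q : (p < q)%N ->
  fsum p.+1 q = fsum p q + (qsum p.+1 q - 1) / p.+1%:R.
Proof.
move=> hpq; suff <- : fsum p.+1 q - fsum p q = (qsum p.+1 q - 1) / p.+1%:R by ring.
rewrite qsum_split !fsum_split (addrC 1) addrK.
have -> : \sum_(0 <= k < p) 2 ^+ k.+1 / k.+1%:R * binq p k.+1 / binq q k.+1
   = \sum_(0 <= k < p.+1) 2 ^+ k.+1 / k.+1%:R * binq p k.+1 / binq q k.+1.
  by rewrite big_nat_recr //= (@binq_small p p.+1) // mulr0 mul0r addr0.
rewrite -sumrB mulr_suml; apply: eq_big_nat => k /andP[_ hk].
rewrite [in RHS]binq_absorb {1}/binq binS natrD -/(binq p k.+1) -/(binq p k).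
have c0 : binq q k.+1 != 0 by apply: binq_neq0; lia.
by field; rewrite c0 !add1n_neq0.
Qed.

(* The two values of Q met on the way from F(p, 2p) to F(p+1, 2p+2), both
   expressed through X = 2^(2p) / C(2p, p) using [rowsum_half]. *)
Lemma qsum_central p : qsum p (2 * p) = 2 ^+ (2 * p) / binq (2 * p) p.
Proof.
rewrite qsum_closed; last lia.
by rewrite (_ : (2 * p).+1 = 2 * p + 1)%N ?rowsum_half //; lia.
Qed.

Lemma qsum_central_next p :
  qsum p.+1 (2 * p + 1)
  = 2 * (2 ^+ (2 * p) / binq (2 * p) p) * p.+1%:R / (2 * p + 1)%:R + 1.
Proof.
rewrite qsum_closed; last lia.
rewrite rowsum_natS rowsumS binomz_nat rowsum_half.
have -> : binq (2 * p + 1) p.+1 = binq (2 * p) p * (2 * p + 1)%:R / p.+1%:R.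
  by rewrite (_ : (2 * p + 1 = (2 * p).+1)%N) ?binq_absorb //; lia.
have c0 : binq (2 * p) p != 0 by apply: binq_neq0; lia.
have d := natr_odd_neq0 p.
move: c0 d; set C := binq (2 * p) p; set D := (2 * p + 1)%:R; clearbody C D.
by move=> c0 d; field; rewrite c0 d add1n_neq0.
Qed.

(* F(p+1, 2p+2) = F(p, 2p) + 1/(2p+1): chain one step in q, one in p and
   one more in q. *)
Lemma fsum_central_step p :
  fsum p.+1 (2 * p.+1) = fsum p (2 * p) + (2 * p + 1)%:R^-1.
Proof.
rewrite (_ : (2 * p.+1 = (2 * p + 1).+1)%N); last lia.
rewrite fsum_succ_right; last lia.
rewrite fsum_succ_left; last lia.
rewrite [in fsum p _]addn1 fsum_succ_right; last lia.
rewrite -[((2 * p).+1)%N]addn1 qsum_central qsum_central_next.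
have c0 : binq (2 * p) p != 0 by apply: binq_neq0; lia.
have d := natr_odd_neq0 p.
move: c0 d; rewrite natr_even.
set C := binq (2 * p) p; set D := (2 * p + 1)%:R; clearbody C D.
by move=> c0 d; field; rewrite c0 d add1n_neq0.
Qed.

Lemma harmS n : harm n.+1 = harm n + n.+1%:R^-1.
Proof. by rewrite /harm big_nat_recr. Qed.

Lemma fsum_central p : fsum p (2 * p) = harm (2 * p) - harm p / 2.
Proof.
elim: p => [|p IH]; first by rewrite /fsum /harm !big_geq // mul0r subr0.
rewrite fsum_central_step IH (_ : (2 * p.+1 = (2 * p).+1.+1)%N); last lia.
rewrite !harmS (_ : (2 * p).+1 = 2 * p + 1)%N; last lia.
have d := natr_odd_neq0 p.
move: d; rewrite natr_even; set D := (2 * p + 1)%:R; set a := harm (2 * p); set b := harm p.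
clearbody D a b => d; field; by rewrite d add1n_neq0.
Qed.

Lemma dsum_rhs_base n : dsum n 0 = rhs n 0.
Proof.
rewrite dsum0_fsum (_ : (2 * n + 2 = 2 * n.+1)%N); last lia.
rewrite fsum_central /rhs big_geq // subr0 expr1.
rewrite (_ : (2 * n.+1 = (2 * n + 1).+1)%N); last lia.
rewrite !harmS; set a := harm (2 * n + 1); set b := harm n; clearbody a b.
by rewrite natr_even; field; rewrite add1n_neq0.
Qed.

Theorem mainTheorem8 (n m : nat) :
  \sum_(0 <= j < n.+1) \sum_(0 <= i < j.+1)
      binomz ((2 * n + 2)%:Z - m%:Z) i / binomz (2 * n + 1)%N j
  = (n.+1)%:R / 2 ^+ m.+1 *
    (2 * harm (2 * n + 1) - harm n
     - \sum_(1 <= k < m.+1)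
         (2 ^+ k.+1 / k%:R *
          (binomz ((2 * n + 2)%:Z - k%:Z) n.+1 / binomz (2 * n + 2)%N n.+1 - 1))).
Proof. exact: (dsum_rhs_from_base n (dsum_rhs_base n) m). Qed.
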